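(* Let $\operatorname{Hi}(z)=\pi^{-1}\int_0^\infty e^{-t^3/3+zt}\,\mathrm dt$ for $z\in\mathbb C$. For all $\theta\in[\pi/2,3\pi/2]$, $x\in\mathbb R$ and $y\ge0$, \[ \big|\operatorname{Hi}(x+e^{\mathrm i\theta}y)\big|\le\operatorname{Hi}(x). \] *)

From Stdlib Require Import Reals.
From Coquelicot Require Import Coquelicot.
Open Scope R_scope.

Definition Cexp (z : C) : C := (exp (Re z) * cos (Im z), exp (Re z) * sin (Im z)).

Definition Hi (z : C) : C :=
  Cmult (RtoC (/ PI))
    (RInt_gen (V := C_R_CompleteNormedModule)
       (fun t : R => Cexp (Cplus (RtoC (- t ^ 3 / 3)) (Cmult z (RtoC t))))
       (at_point 0) (Rbar_locally p_infty)).

From Stdlib Require Import Reals Lra Psatz.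
From Coquelicot Require Import Coquelicot.
Open Scope R_scope.

(* Write [integrand z t = exp(-t^3/3 + z t)], so that
   [Hi z = /PI * int_0^oo integrand z].  Its modulus is the real weight
   [weight (Re z) t = exp(-t^3/3 + Re z * t)], and for [t >= 0] this weight is
   nondecreasing in [Re z].  Since [Re (x + e^{i theta} y) = x + y cos theta <= x]
   for [theta] in [[PI/2, 3PI/2]] and [y >= 0], the integrand at
   [z = x + e^{i theta} y] is dominated in norm by the (real, positive) integrand
   at [x]; integrating this domination gives [|Hi z| <= Hi x]. *)

Definition integrand (z : C) (t : R) : C :=
  Cexp (Cplus (RtoC (- t ^ 3 / 3)) (Cmult z (RtoC t))).

Definition weight (c t : R) : R := exp (- t ^ 3 / 3 + c * t).

Lemma exp_monotone (a b : R) : a <= b -> exp a <= exp b.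
Proof. intros [Hlt | ->]; [now left; apply exp_increasing | apply Rle_refl]. Qed.

Lemma integrand_polar (z : C) (t : R) :
  integrand z t = (weight (Re z) t * cos (Im z * t), weight (Re z) t * sin (Im z * t)).
Proof.
  destruct z as [a b]; unfold integrand, Cexp, weight, Re, Im; simpl.
  f_equal; f_equal; f_equal; ring.
Qed.

Lemma integrand_real (c t : R) : integrand (RtoC c) t = RtoC (weight c t).
Proof.
  rewrite integrand_polar; unfold Im, Re, RtoC; simpl.
  now rewrite Rmult_0_l, cos_0, sin_0, Rmult_1_r, Rmult_0_r.
Qed.

Lemma norm_integrand (z : C) (t : R) :
  norm (V := C_R_NormedModule) (integrand z t) = weight (Re z) t.
Proof.
  rewrite <- Cmod_norm, integrand_polar; unfold Cmod; cbn [fst snd].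
  set (w := weight (Re z) t); set (u := Im z * t).
  replace ((w * cos u) ^ 2 + (w * sin u) ^ 2) with (w ^ 2 * (Rsqr (sin u) + Rsqr (cos u)))
    by (unfold Rsqr; ring).
  rewrite sin2_cos2, Rmult_1_r; apply sqrt_pow2.
  left; apply exp_pos.
Qed.

Lemma ex_RInt_integrand (z : C) (a b : R) :
  ex_RInt (V := C_R_CompleteNormedModule) (integrand z) a b.
Proof.
  assert (Hcomp : forall g : R -> R, (forall t, ex_derive g t) -> ex_RInt g a b).
  { intros g Hg; apply (ex_RInt_continuous (V := R_CompleteNormedModule)); intros t _.
    now apply (ex_derive_continuous (K := R_AbsRing) (V := R_NormedModule)). }
  assert (H1 : ex_RInt (fun t => fst (integrand z t)) a b).
  { apply Hcomp; intros t.
    apply (ex_derive_ext (fun s => weight (Re z) s * cos (Im z * s))).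
    - intros s; now rewrite integrand_polar.
    - unfold weight; auto_derive; auto. }
  assert (H2 : ex_RInt (fun t => snd (integrand z t)) a b).
  { apply Hcomp; intros t.
    apply (ex_derive_ext (fun s => weight (Re z) s * sin (Im z * s))).
    - intros s; now rewrite integrand_polar.
    - unfold weight; auto_derive; auto. }
  destruct H1 as [l1 H1], H2 as [l2 H2].
  exists (l1, l2).
  now apply (is_RInt_fct_extend_pair (U := R_NormedModule) (V := R_NormedModule)).
Qed.

Lemma cubic_exponent_bound (c t : R) :
  0 <= t -> - t ^ 3 / 3 + c * t <= 2 * (Rabs c + 1) ^ 2 - t.
Proof.
  intros Ht.
  assert (Hc : c <= Rabs c) by apply Rle_abs.
  assert (Ha : 0 <= Rabs c) by apply Rabs_pos.
  set (a := Rabs c + 1) in *.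
  assert (Hct : (c + 1) * t <= a * t) by (apply Rmult_le_compat_r; unfold a; lra).
  enough (- t ^ 3 / 3 + a * t <= 2 * a ^ 2) by lra.
  destruct (Rle_lt_dec (3 * a) (t ^ 2)) as [Hbig | Hsmall].
  - (* the cubic term dominates: t (a - t^2/3) <= 0 *)
    assert (t * (a - t ^ 2 / 3) <= 0) by (apply Rmult_le_0_l; lra).
    unfold a in *; nra.
  - (* a t <= (a^2 + t^2)/2 < (a^2 + 3a)/2 <= 2 a^2 *)
    assert (0 <= t ^ 3) by (apply pow_le; lra).
    unfold a in *; nra.
Qed.

Lemma integrand_exp_decay (z : C) (t : R) :
  0 <= t -> norm (V := C_R_NormedModule) (integrand z t) <= exp (2 * (Rabs (Re z) + 1) ^ 2) * exp (- t).
Proof.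
  intros Ht; rewrite norm_integrand, <- exp_plus; apply exp_monotone.
  pose proof (cubic_exponent_bound (Re z) t Ht); lra.
Qed.

Lemma norm_integrand_le (z : C) (c t : R) :
  Re z <= c -> 0 <= t -> norm (V := C_R_NormedModule) (integrand z t) <= weight c t.
Proof.
  intros Hzc Ht; rewrite norm_integrand; apply exp_monotone.
  apply Rplus_le_compat_l, Rmult_le_compat_r; assumption.
Qed.

Section ImproperIntegral.

Context {V : CompleteNormedModule R_AbsRing}.

Lemma ex_RInt_gen_cauchy (f : R -> V) (a : R) :
  (forall b c, ex_RInt f b c) ->
  (forall eps : posreal, exists N, forall b, N <= b -> norm (RInt f N b) < eps) ->
  ex_RInt_gen f (at_point a) (Rbar_locally p_infty).
Proof.
  intros Hint Htail.
  set (G := fun b => RInt f a b).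
  set (F := filtermap G (Rbar_locally p_infty)).
  assert (PF : ProperFilter F) by apply filtermap_proper_filter, Rbar_locally_filter.
  assert (HC : cauchy F).
  { intros eps; destruct (Htail eps) as [N HN].
    exists (G N), N; intros b Hb.
    apply (norm_compat1 (K := R_AbsRing) (V := V)).
    assert (Hdiff : minus (G b) (G N) = RInt f N b).
    { unfold G; rewrite <- (RInt_Chasles f a N b) by apply Hint.
      unfold minus; rewrite plus_comm, plus_assoc, plus_opp_l; apply plus_zero_l. }
    apply Rle_lt_trans with (norm (RInt f N b)); [right; apply f_equal, Hdiff | apply HN; lra]. }
  assert (Hlim : filterlim G (Rbar_locally p_infty) (locally (lim F))).
  { apply filterlim_locally; intros eps; apply (complete_cauchy F PF HC eps). }
  exists (lim F).
  apply (filterlimi_lim_ext_loc (fun ab => RInt f (fst ab) (snd ab))).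
  - apply Filter_prod with (Q := fun _ => True) (R := fun _ => True);
      [exact I | apply filter_true |].
    intros u v _ _; apply RInt_correct, Hint.
  - intros P HP.
    apply Filter_prod with (Q := fun u => u = a) (R := fun b => P (G b)); [reflexivity | |].
    + now apply Hlim.
    + intros u v -> HPv; exact HPv.
Qed.

Lemma RInt_exp_dominated (f : R -> V) (M b1 b2 : R) :
  (forall b c, ex_RInt f b c) ->
  (forall t, 0 <= t -> norm (f t) <= M * exp (- t)) ->
  0 <= b1 <= b2 -> norm (RInt f b1 b2) <= M * exp (- b1).
Proof.
  intros Hint Hdom Hb.
  assert (HM : 0 <= M).
  { pose proof (norm_ge_0 (f 0)) as H0; specialize (Hdom 0 (Rle_refl 0)).
    rewrite Ropp_0, exp_0, Rmult_1_r in Hdom; lra. }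
  apply Rle_trans with (M * exp (- b1) - M * exp (- b2)).
  2: { pose proof (exp_pos (- b2)); nra. }
  apply (norm_RInt_le f (fun t => M * exp (- t)) b1 b2); [lra | | apply RInt_correct, Hint |].
  - intros t Ht; apply Hdom; lra.
  - (* fundamental theorem of calculus for the primitive [- M e^{-t}] *)
    replace (M * exp (- b1) - M * exp (- b2)) with (minus (- M * exp (- b2)) (- M * exp (- b1)))
      by (unfold minus, plus, opp; simpl; ring).
    apply (is_RInt_derive (V := R_CompleteNormedModule) (fun t => - M * exp (- t))).
    + intros t _; auto_derive; auto; ring.
    + intros t _; apply (ex_derive_continuous (K := R_AbsRing) (V := R_NormedModule)).
      auto_derive; auto.
Qed.

Lemma ex_RInt_gen_exp_dominated (f : R -> V) (M : R) :
  (forall b c, ex_RInt f b c) ->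
  (forall t, 0 <= t -> norm (f t) <= M * exp (- t)) ->
  ex_RInt_gen f (at_point 0) (Rbar_locally p_infty).
Proof.
  intros Hint Hdom; apply ex_RInt_gen_cauchy; [exact Hint |].
  intros eps; pose proof (cond_pos eps) as He.
  set (N := Rmax 0 (Rabs M / eps)).
  assert (HN0 : 0 <= N) by apply Rmax_l.
  assert (HMN : Rabs M <= eps * N).
  { apply Rle_trans with (eps * (Rabs M / eps)); [right; field; lra |].
    apply Rmult_le_compat_l; [lra | apply Rmax_r]. }
  exists N; intros b Hb.
  eapply Rle_lt_trans; [apply (RInt_exp_dominated f M); auto; lra |].
  (* M e^{-N} <= |M| / (1 + N) < eps *)
  pose proof (exp_ineq1_le N); pose proof (exp_pos N); pose proof (Rle_abs M).
  rewrite exp_Ropp; apply Rmult_lt_reg_r with (exp N); [assumption |].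
  rewrite Rmult_assoc, Rinv_l by lra; nra.
Qed.

End ImproperIntegral.

Lemma is_RInt_gen_fst {U W : NormedModule R_AbsRing} {Fa Fb : (R -> Prop) -> Prop}
  (f : R -> U * W) (l : U * W) :
  Filter Fa -> Filter Fb ->
  is_RInt_gen f Fa Fb l -> is_RInt_gen (fun t => fst (f t)) Fa Fb (fst l).
Proof.
  intros HFa HFb Hf; apply filterlimi_locally; intros eps.
  apply filterlimi_locally with (eps := eps) in Hf.
  eapply filter_imp; [| exact Hf].
  intros [a b] [w [Hw [Hfst _]]]; exists (fst w); split; [| exact Hfst].
  exact (is_RInt_fct_extend_fst f a b w Hw).
Qed.

Lemma is_RInt_gen_integrand (z : C) :
  is_RInt_gen (V := C_R_NormedModule) (integrand z) (at_point 0) (Rbar_locally p_infty)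
    (RInt_gen (V := C_R_CompleteNormedModule) (integrand z) (at_point 0) (Rbar_locally p_infty)).
Proof.
  apply (RInt_gen_correct (V := C_R_CompleteNormedModule)).
  apply (ex_RInt_gen_exp_dominated (V := C_R_CompleteNormedModule) _
           (exp (2 * (Rabs (Re z) + 1) ^ 2)) (ex_RInt_integrand z)).
  apply integrand_exp_decay.
Qed.

Lemma eventually_segment_from_0 (P : R * R -> Prop) :
  (forall b, 0 <= b -> P (0, b)) ->
  filter_prod (at_point 0) (Rbar_locally p_infty) P.
Proof.
  intros HP; apply Filter_prod with (Q := fun a => a = 0) (R := fun b => 0 <= b).
  - reflexivity.
  - exists 0; intros; lra.
  - intros a b -> Hb; now apply HP.
Qed.

Lemma Re_shift_le (theta x y : R) :
  PI / 2 <= theta <= 3 * PI / 2 -> 0 <= y ->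
  Re (Cplus (RtoC x) (Cmult (Cexp (0, theta)) (RtoC y))) <= x.
Proof.
  intros Hth Hy.
  assert (Hcos : cos theta <= 0) by (apply cos_le_0; lra).
  unfold Cexp, Re; simpl; rewrite exp_0; nra.
Qed.

Theorem lemma3p3 (theta x y : R) :
  PI / 2 <= theta <= 3 * PI / 2 -> 0 <= y ->
  Cmod (Hi (Cplus (RtoC x) (Cmult (Cexp (0, theta)) (RtoC y)))) <= Re (Hi (RtoC x)).
Proof.
  intros Hth Hy.
  set (z := Cplus (RtoC x) (Cmult (Cexp (0, theta)) (RtoC y))).
  assert (Hre : Re z <= x) by exact (Re_shift_le theta x y Hth Hy).
  unfold Hi; fold (integrand z) (integrand (RtoC x)).
  set (Iz := RInt_gen _ _ _); set (Ix := RInt_gen _ _ _).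
  assert (Hpi : 0 <= / PI) by (left; apply Rinv_0_lt_compat, PI_RGT_0).
  rewrite Cmod_mult, Cmod_R, Rabs_pos_eq by exact Hpi.
  replace (Re (Cmult (RtoC (/ PI)) Ix)) with (/ PI * fst Ix)
    by (unfold Re, Cmult, RtoC; simpl; ring).
  apply Rmult_le_compat_l; [exact Hpi |].
  (* |int integrand z| <= int weight x = Re (int integrand x) *)
  rewrite Cmod_norm.
  apply (RInt_gen_norm (V := C_R_CompleteNormedModule) (Fa := at_point 0)
           (Fb := Rbar_locally p_infty) (integrand z) (weight x)).
  - apply eventually_segment_from_0; auto.
  - apply eventually_segment_from_0; intros b _ t Ht.
    apply norm_integrand_le; [exact Hre | simpl in Ht; lra].
  - apply is_RInt_gen_integrand.
  - apply (is_RInt_gen_ext (V := R_NormedModule) (fun t => fst (integrand (RtoC x) t))).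
    + apply eventually_segment_from_0; intros b _ t _; now rewrite integrand_real.
    + apply (is_RInt_gen_fst (U := R_NormedModule) (W := R_NormedModule)); try apply _.
      apply is_RInt_gen_integrand.
Qed.
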